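(* Let $X$ be a real Banach space, let $A\subset X\times X^*$ be self-cancelling and suppose $A^\vdash$ is monotone. Then $A^\vdash$ is maximal monotone.
   Context: $\langle x,x^*\rangle=x^*(x)$. $A$ is self-cancelling if it is a linear subspace of $X\times X^*$ with $\langle x,x^*\rangle=0$ for all $(x,x^* )\in A$. $B^\vdash=\{(y,y^* )\mid \langle x,y^*\rangle+\langle y,x^*\rangle=0\ \forall (x,x^* )\in B\}$. A set $T\subset X\times X^*$ is monotone if $\langle x-y,x^*-y^*\rangle\ge0$ for all $(x,x^* ),(y,y^* )\in T$, and maximal monotone if it is monotone and not properly contained in any monotone set. *)

From HB Require Import structures.
From mathcomp Require Import all_boot all_order all_algebra.
From mathcomp Require Import all_classical all_reals all_analysis.
Set Implicit Arguments. Unset Strict Implicit. Unset Printing Implicit Defensive.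
Import Order.TTheory GRing.Theory Num.Theory.
Import numFieldNormedType.Exports.
Local Open Scope classical_set_scope.
Local Open Scope ring_scope.

(* The dual space Xdual is represented as the set of continuous linear
   functionals X -> R; elements of X x Xdual are pairs (x, xd) with
   xd : X -> R satisfying [is_dual]. *)
Definition is_dual (R : realType) (X : normedModType R) (f : X -> R) : Prop :=
  (forall (a : R) (x y : X), f (a *: x + y) = a * f x + f y) /\ continuous f.

Definition dpair (R : realType) (X : normedModType R) (x : X) (f : X -> R) : R := f x.

Definition XXs (R : realType) (X : normedModType R) : set (X * (X -> R)) :=
  [set p | is_dual p.2].

Definition is_subspace (R : realType) (X : normedModType R)
  (A : set (X * (X -> R))) : Prop :=
  A `<=` @XXs R X /\ A (0, fun _ => 0) /\
  forall (a : R) (p q : X * (X -> R)), A p -> A q ->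
    A (a *: p.1 + q.1, fun z => a * p.2 z + q.2 z).

Definition self_cancelling (R : realType) (X : normedModType R)
  (A : set (X * (X -> R))) : Prop :=
  is_subspace A /\ forall p, A p -> dpair p.1 p.2 = 0.

Definition perp (R : realType) (X : normedModType R)
  (B : set (X * (X -> R))) : set (X * (X -> R)) :=
  [set q | @XXs R X q /\ forall p, B p -> dpair p.1 q.2 + dpair q.1 p.2 = 0].

Definition monotone_set (R : realType) (X : normedModType R)
  (T : set (X * (X -> R))) : Prop :=
  T `<=` @XXs R X /\
  forall p q, T p -> T q -> 0 <= dpair (p.1 - q.1) (fun z => p.2 z - q.2 z).

Definition maximal_monotone (R : realType) (X : normedModType R)
  (T : set (X * (X -> R))) : Prop :=
  monotone_set T /\
  forall T', monotone_set T' -> T `<=` T' -> T' = T.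

From Pilot Require Import Defs.
From mathcomp Require Import all_boot all_order all_algebra.
From mathcomp Require Import all_classical all_reals all_analysis.
From mathcomp Require Import lra.
Set Implicit Arguments. Unset Strict Implicit.
Import Order.TTheory GRing.Theory Num.Theory.
Local Open Scope classical_set_scope.
Local Open Scope ring_scope.

(* A self-cancelling subspace A lies in its own polar A^|-, by polarising
   <x + y, f + g> = 0.  If T is monotone and contains A, then for (y, g) in T
   and (x, f) in A, monotonicity against the multiples t (x, f) in A gives
   <y, g> - t (<x, g> + <y, f>) >= 0 for every real t (the t^2 term vanishes
   because A is self-cancelling), which forces <x, g> + <y, f> = 0, i.e. T is
   contained in A^|-.  Applied to a monotone extension T of A^|- this is
   maximality. *)

Section LinearFunctional.
Variables (R : realType) (X : normedModType R) (f : X -> R).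
Hypothesis f_linear : forall (a : R) (x y : X), f (a *: x + y) = a * f x + f y.

Lemma linear_fun0 : f 0 = 0.
Proof. by have := f_linear 1 0 0; rewrite scaler0 addr0 mul1r; lra. Qed.

Lemma linear_funD x y : f (x + y) = f x + f y.
Proof. by rewrite -[x in LHS]scale1r f_linear mul1r. Qed.

Lemma linear_funZ a x : f (a *: x) = a * f x.
Proof. by rewrite -[a *: x]addr0 f_linear linear_fun0 addr0. Qed.

Lemma linear_funB x y : f (x - y) = f x - f y.
Proof. by rewrite -scaleN1r linear_funD linear_funZ; lra. Qed.

End LinearFunctional.

Lemma nonneg_affine_slope0 (R : realFieldType) (a c : R) :
  (forall t, 0 <= a - t * c) -> c = 0.
Proof.
move=> ge0; apply/eqP; apply/negPn/negP => c_neq0.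
by have := ge0 ((a + 1) / c); rewrite divfK //; lra.
Qed.

Section SelfCancelling.
Variables (R : realType) (X : normedModType R) (A : set (X * (X -> R))).
Hypothesis A_sc : self_cancelling A.

Lemma self_cancelling_sub_perp : A `<=` perp A.
Proof.
have [[AX [_ A_cl]] A_iso] := A_sc.
move=> q Aq; split; first exact: AX.
move=> p Ap; rewrite /Defs.dpair.
have [[p2_lin _] [q2_lin _]] := (AX _ Ap, AX _ Aq).
have := A_iso _ (A_cl 1 p q Ap Aq); have := A_iso _ Ap; have := A_iso _ Aq.
rewrite /Defs.dpair /= !scale1r !mul1r !(linear_funD p2_lin) !(linear_funD q2_lin).
lra.
Qed.

Lemma monotone_ext_sub_perp (T : set (X * (X -> R))) :
  monotone_set T -> A `<=` T -> T `<=` perp A.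
Proof.
have [[AX [A0 A_cl]] A_iso] := A_sc.
move=> [TX T_mon] A_T y Ty; split; first exact: TX.
move=> p Ap; rewrite /Defs.dpair addrC.
have [[y2_lin _] [p2_lin _]] := (TX _ Ty, AX _ Ap).
apply: (@nonneg_affine_slope0 _ (y.2 y.1)) => t.
have := T_mon _ _ Ty (A_T _ (A_cl t p _ Ap A0)); have := A_iso _ Ap.
rewrite /Defs.dpair /= !addr0 (linear_funB y2_lin) (linear_funZ y2_lin).
rewrite (linear_funB p2_lin) (linear_funZ p2_lin) => ->.
by rewrite mulr0 subr0; lra.
Qed.

End SelfCancelling.

Theorem lemma4 (R : realType) (X : completeNormedModType R)
  (A : set (X * (X -> R))) :
  self_cancelling A -> monotone_set (perp A) -> maximal_monotone (perp A).
Proof.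
move=> A_sc perp_mon; split => // T T_mon perp_T.
apply/seteqP; split => //.
apply: (monotone_ext_sub_perp A_sc T_mon).
exact: subset_trans (self_cancelling_sub_perp A_sc) perp_T.
Qed.
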